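(* Let $I\subset\mathbb{R}$ be an open interval and let $x_1,x_2,\varphi:I\to\mathbb{R}$ be smooth functions such that the curve $\gamma(u)=(x_1(u),x_2(u),\cos\varphi(u),\sin\varphi(u))$ in $\mathbb{E}^4$ is parametrized by arclength, i.e. $(x_1')^2+(x_2')^2+(\varphi')^2=1$, and such that $1-(\varphi'(u))^2\neq 0$ for all $u\in I$. Let $M$ be the surface with position vector $$X(u,v)=\big(x_1(u),\,x_2(u),\,\cos\varphi(u)\cos v-\sin\varphi(u)\sin v,\,\cos\varphi(u)\sin v+\sin\varphi(u)\cos v\big).$$ Then $M$ is flat, i.e. its Gaussian curvature vanishes identically.
   Context: The first fundamental form coefficients are $E=\langle X_u,X_u\rangle$, $F=\langle X_u,X_v\rangle$, $G=\langle X_v,X_v\rangle$, and regularity means $W^2=EG-F^2\neq 0$. The Gaussian curvature is that of the induced metric. *)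

From Stdlib Require Import Reals.
From Coquelicot Require Import Coquelicot.
Open Scope R_scope.

Definition in_open_interval (a b : Rbar) (u : R) : Prop :=
  Rbar_lt a u /\ Rbar_lt u b.

Definition smooth_on (I : R -> Prop) (f : R -> R) : Prop :=
  forall (n : nat) (u : R), I u -> ex_derive_n f n u.

Definition pu (f : R -> R -> R) (u v : R) : R := Derive (fun s => f s v) u.
Definition pv (f : R -> R -> R) (u v : R) : R := Derive (fun t => f u t) v.

(* A parametrized surface in E^4, given by its 4 coordinate functions
   X 0, X 1, X 2, X 3. *)
Definition surface4 := nat -> R -> R -> R.

Definition coefE (X : surface4) (u v : R) : R :=
  sum_f_R0 (fun i => pu (X i) u v * pu (X i) u v) 3.
Definition coefF (X : surface4) (u v : R) : R :=
  sum_f_R0 (fun i => pu (X i) u v * pv (X i) u v) 3.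
Definition coefG (X : surface4) (u v : R) : R :=
  sum_f_R0 (fun i => pv (X i) u v * pv (X i) u v) 3.

Definition det3 (a11 a12 a13 a21 a22 a23 a31 a32 a33 : R) : R :=
  a11 * (a22 * a33 - a23 * a32)
  - a12 * (a21 * a33 - a23 * a31)
  + a13 * (a21 * a32 - a22 * a31).

(* Gaussian curvature of the induced metric E du^2 + 2F du dv + G dv^2,
   via Brioschi's formula (intrinsic curvature expressed in E, F, G and
   their partial derivatives up to order 2). *)
Definition gauss_curv (X : surface4) (u v : R) : R :=
  let E := coefE X in
  let F := coefF X in
  let G := coefG X in
  let Eu := pu E u v in let Ev := pv E u v in
  let Fu := pu F u v in let Fv := pv F u v in
  let Gu := pu G u v in let Gv := pv G u v in
  let Evv := pv (pv E) u v in
  let Fuv := pv (pu F) u v in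
  let Guu := pu (pu G) u v in
  let e := E u v in let f := F u v in let g := G u v in
  (det3 (- Evv / 2 + Fuv - Guu / 2) (Eu / 2) (Fu - Ev / 2)
        (Fv - Gu / 2) e f
        (Gv / 2) f g
   - det3 0 (Ev / 2) (Gu / 2)
          (Ev / 2) e f
          (Gu / 2) f g)
  / (e * g - f * f) ^ 2.

Definition rot_surface (x1 x2 phi : R -> R) : surface4 :=
  fun i u v =>
    match i with
    | 0%nat => x1 u
    | 1%nat => x2 u
    | 2%nat => cos (phi u) * cos v - sin (phi u) * sin v
    | _ => cos (phi u) * sin v + sin (phi u) * cos v
    end.

(* Since the last two coordinates are cos(φ(u)+v) and sin(φ(u)+v), arclength
   parametrization gives E = G = 1 and F = φ'(u).  A metric with constant E, G
   and F independent of v has every derivative in Brioschi's formula equal to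
   zero except F_u, which only meets a zero column, so K = 0.  The numerator
   vanishes identically. *)
From Stdlib Require Import Reals Lra.
From Coquelicot Require Import Coquelicot.
Open Scope R_scope.

Lemma pv_eq0_of_const (g : R -> R -> R) (c u v : R) :
  (forall t, g u t = c) -> pv g u v = 0.
Proof.
intros Hg. unfold pv. rewrite (Derive_ext _ (fun _ => c)) by exact Hg.
apply Derive_const.
Qed.

Lemma pu_eq0_of_locally_const (g : R -> R -> R) (c u v : R) :
  locally u (fun s => g s v = c) -> pu g u v = 0.
Proof.
intros Hg. unfold pu. rewrite (Derive_ext_loc _ (fun _ => c)) by exact Hg.
apply Derive_const.
Qed.

Lemma gauss_curv_eq0_of_metric (X : surface4) (N : R -> Prop)
    (cE cG : R) (f : R -> R) (u v : R) :
  open N -> N u ->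
  (forall s t, N s -> coefE X s t = cE) ->
  (forall s t, N s -> coefF X s t = f s) ->
  (forall s t, N s -> coefG X s t = cG) ->
  gauss_curv X u v = 0.
Proof.
intros HN Nu HE HF HG.
assert (near_u : forall P : R -> Prop, (forall s, N s -> P s) -> locally u P).
{ intros P HP. exact (filter_imp _ _ HP (HN u Nu)). }
assert (Ev : forall t, pv (coefE X) u t = 0).
{ intros t. apply pv_eq0_of_const with cE. intros; exact (HE _ _ Nu). }
assert (Eu : pu (coefE X) u v = 0).
{ apply pu_eq0_of_locally_const with cE; apply near_u. intros s Ns; exact (HE s v Ns). }
assert (Evv : pv (pv (coefE X)) u v = 0) by exact (pv_eq0_of_const _ 0 _ _ Ev).
assert (Fv : pv (coefF X) u v = 0).
{ apply pv_eq0_of_const with (f u). intros; exact (HF _ _ Nu). }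
assert (Fuv : pv (pu (coefF X)) u v = 0).
{ apply pv_eq0_of_const with (Derive f u). intros t.
  apply Derive_ext_loc; apply near_u. intros s Ns; exact (HF s t Ns). }
assert (Gu : forall s t, N s -> pu (coefG X) s t = 0).
{ intros s t Ns. apply pu_eq0_of_locally_const with cG.
  exact (filter_imp _ _ (fun s' Ns' => HG s' t Ns') (HN s Ns)). }
assert (Gv : pv (coefG X) u v = 0).
{ apply pv_eq0_of_const with cG. intros; exact (HG _ _ Nu). }
assert (Guu : pu (pu (coefG X)) u v = 0).
{ apply pu_eq0_of_locally_const with 0; apply near_u. intros s Ns; exact (Gu s v Ns). }
unfold gauss_curv. rewrite Eu, Ev, Evv, Fv, Fuv, (Gu u v Nu), Gv, Guu.
unfold det3, Rdiv. ring.
Qed.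

Section RotSurface.

Variables x1 x2 phi : R -> R.
Local Notation X := (rot_surface x1 x2 phi).

Lemma rot_surface2 s t : X 2%nat s t = cos (phi s + t).
Proof. now rewrite cos_plus. Qed.

Lemma rot_surface3 s t : X 3%nat s t = sin (phi s + t).
Proof. now rewrite sin_plus, Rplus_comm. Qed.

Lemma pu_rot_surface2 s t : ex_derive phi s ->
  pu (X 2%nat) s t = - Derive phi s * sin (phi s + t).
Proof.
intros Hd. unfold pu. rewrite (Derive_ext _ (fun s => cos (phi s + t)))
  by (intros; apply rot_surface2).
apply is_derive_unique. auto_derive; [exact Hd |].
change (fun x => phi x) with phi. ring.
Qed.

Lemma pu_rot_surface3 s t : ex_derive phi s ->
  pu (X 3%nat) s t = Derive phi s * cos (phi s + t).
Proof.
intros Hd. unfold pu. rewrite (Derive_ext _ (fun s => sin (phi s + t)))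
  by (intros; apply rot_surface3).
apply is_derive_unique. auto_derive; [exact Hd |].
change (fun x => phi x) with phi. ring.
Qed.

Lemma pv_rot_surface2 s t : pv (X 2%nat) s t = - sin (phi s + t).
Proof.
unfold pv. rewrite (Derive_ext _ (fun t => cos (phi s + t)))
  by (intros; apply rot_surface2).
apply is_derive_unique. auto_derive; [easy | ring].
Qed.

Lemma pv_rot_surface3 s t : pv (X 3%nat) s t = cos (phi s + t).
Proof.
unfold pv. rewrite (Derive_ext _ (fun t => sin (phi s + t)))
  by (intros; apply rot_surface3).
apply is_derive_unique. auto_derive; [easy | ring].
Qed.

Lemma pv_rot_surface01 s t : pv (X 0%nat) s t = 0 /\ pv (X 1%nat) s t = 0.
Proof. unfold pv, rot_surface; split; apply Derive_const. Qed.

Lemma coefE_rot_surface s t : ex_derive phi s ->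
  Derive x1 s ^ 2 + Derive x2 s ^ 2 + Derive phi s ^ 2 = 1 ->
  coefE X s t = 1.
Proof.
intros Hd Harc. unfold coefE; simpl.
rewrite (pu_rot_surface2 _ _ Hd), (pu_rot_surface3 _ _ Hd).
pose proof (sin2_cos2 (phi s + t)) as Htrig. unfold Rsqr in Htrig.
change (pu (X 0%nat) s t) with (Derive x1 s).
change (pu (X 1%nat) s t) with (Derive x2 s).
nra.
Qed.

Lemma coefF_rot_surface s t : ex_derive phi s -> coefF X s t = Derive phi s.
Proof.
intros Hd. unfold coefF; simpl.
destruct (pv_rot_surface01 s t) as [-> ->].
rewrite (pu_rot_surface2 _ _ Hd), (pu_rot_surface3 _ _ Hd).
rewrite pv_rot_surface2, pv_rot_surface3.
transitivity (Derive phi s * (Rsqr (sin (phi s + t)) + Rsqr (cos (phi s + t)))).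
- unfold Rsqr. ring.
- rewrite sin2_cos2. ring.
Qed.

Lemma coefG_rot_surface s t : coefG X s t = 1.
Proof.
unfold coefG; simpl. destruct (pv_rot_surface01 s t) as [-> ->].
rewrite pv_rot_surface2, pv_rot_surface3.
pose proof (sin2_cos2 (phi s + t)) as Htrig. unfold Rsqr in Htrig. nra.
Qed.

End RotSurface.

Theorem proposition1 (a b : Rbar) (x1 x2 phi : R -> R) :
  Rbar_lt a b ->
  smooth_on (in_open_interval a b) x1 ->
  smooth_on (in_open_interval a b) x2 ->
  smooth_on (in_open_interval a b) phi ->
  (forall u, in_open_interval a b u ->
     (Derive x1 u) ^ 2 + (Derive x2 u) ^ 2 + (Derive phi u) ^ 2 = 1) ->
  (forall u, in_open_interval a b u -> 1 - (Derive phi u) ^ 2 <> 0) ->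
  forall u v : R, in_open_interval a b u ->
    gauss_curv (rot_surface x1 x2 phi) u v = 0.
Proof.
intros _ _ _ Hphi Harc _ u v Hu.
assert (Hd : forall s, in_open_interval a b s -> ex_derive phi s)
  by (intros s Hs; exact (Hphi 1%nat s Hs)).
assert (Hopen : open (in_open_interval a b))
  by exact (open_and _ _ (open_Rbar_gt a) (open_Rbar_lt b)).
apply (gauss_curv_eq0_of_metric _ _ 1 1 (Derive phi) u v Hopen Hu).
- intros s t Hs. exact (coefE_rot_surface _ _ _ _ _ (Hd s Hs) (Harc s Hs)).
- intros s t Hs. exact (coefF_rot_surface _ _ _ _ _ (Hd s Hs)).
- intros s t _. apply coefG_rot_surface.
Qed.
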